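(* Let $\alpha\in(0,1)$, $\gamma,\beta>0$, $\lambda=\beta+\gamma$, $r_0>0$, $Y=B(0,r_0)\subset\mathbb R\oplus\mathbb R^{d-1}$, and $\mathcal X(x)=\|x\|^\alpha Ax$ with $A=\gamma\,\mathrm{Id}_{\mathbb R}\oplus(-\beta\,\mathrm{Id}_{\mathbb R^{d-1}})$, with flow $\varphi_t$. Let $x(t)$ be a trajectory in $Y$ for $t\in[0,T_0]$ and $\theta(t)$ its angle with $\mathbb R\times\{0\}$. Let $v(t)=D\varphi_t(x(0))v(0)$ be a flow-invariant family of tangent vectors along $x$, write $v=v_u+v_s$ with $v_u\in\mathbb R\times\{0\}$, $v_s\in\{0\}\times\mathbb R^{d-1}$, and let $\rho(t)$ be the angle between $v(t)$ and $\mathbb R\times\{0\}$, $\tan\rho=\|v_s\|/\|v_u\|$. Then for $t\in[0,T_0]$, if $\tan\rho(t)\le1$, $$(\tan\rho)'\le-\lambda\|x\|^\alpha\tan\rho+\alpha\lambda\|x\|^\alpha\frac{\tan\theta}{1+\tan^2\theta}.$$ *)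

From HB Require Import structures.
From mathcomp Require Import all_boot all_order all_algebra.
From mathcomp Require Import all_classical all_reals all_analysis.
Set Implicit Arguments. Unset Strict Implicit. Unset Printing Implicit Defensive.
Import Order.TTheory GRing.Theory Num.Theory.
Import numFieldNormedType.Exports.
Local Open Scope ring_scope.

(* Points of R^d = R (+) R^(d-1) with d = n.+1 are row vectors 'rV[R]_n.+1;
   coordinate ord0 is the R-factor (unstable direction), the coordinates
   lift ord0 i (i : 'I_n) form the R^(d-1)-factor (stable directions). *)
Section Defs.
Variables (R : realType) (n : nat).

Definition enorm (x : 'rV[R]_n.+1) : R := Num.sqrt (\sum_i x ord0 i ^+ 2).

Definition ucomp (x : 'rV[R]_n.+1) : R := x ord0 ord0.

Definition snorm (x : 'rV[R]_n.+1) : R :=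
  Num.sqrt (\sum_(i < n) x ord0 (lift ord0 i) ^+ 2).

Definition tan_ang (x : 'rV[R]_n.+1) : R := snorm x / `|ucomp x|.

Definition Amx (ga be : R) : 'M[R]_n.+1 :=
  diag_mx (\row_(i < n.+1) (if i == ord0 then ga else - be)).

Definition vfield (al ga be : R) (x : 'rV[R]_n.+1) : 'rV[R]_n.+1 :=
  (enorm x `^ al) *: (x *m Amx ga be).

End Defs.

From HB Require Import structures.
From mathcomp Require Import all_boot all_order all_algebra.
From mathcomp Require Import all_classical all_reals all_analysis.
From mathcomp Require Import ring lra.
Set Implicit Arguments.
Unset Strict Implicit.
Unset Printing Implicit Defensive.

Import Order.TTheory GRing.Theory Num.Theory.
Import numFieldNormedType.Exports.
Local Open Scope ring_scope.

(* Along the trajectory, v' = (c x + N v) A with N = |x|^alpha and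
   c = alpha N <x, v> / |x|^2.  Writing T = tan rho, u = +-x_u and
   q = <x_s, v_s> / |v_s| (so |q| <= |x_s| by Cauchy-Schwarz), this gives
     (tan rho)' = -(beta + gamma) N T - (alpha N / |x|^2) (u + T q) (beta q + gamma T u).
   For 0 <= T <= 1 the last product is at least -(beta + gamma) |u| |q|, and
   |x_u| |x_s| / |x|^2 = tan theta / (1 + tan^2 theta).  If v_s = 0, then tan rho
   attains its minimum 0 at t, so its derivative vanishes there. *)

Section RealCalculus.
Variable R : realType.
Local Open Scope classical_set_scope.

Lemma is_derive_coord m p (f : R -> 'M[R]_(m, p)) (t : R) (df : 'M[R]_(m, p)) i j :
  is_derive t 1 f df -> is_derive t 1 (fun s => f s i j) (df i j).
Proof.
move=> [fdrv <-].
have dq_coordE : (fun h : R => h^-1 *: (((fun s => f s i j) \o shift t) (h *: 1) - f t i j))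
    = (fun h : R => (h^-1 *: ((f \o shift t) (h *: 1) - f t)) i j).
  by apply/funext => h; rewrite !mxE.
have dq_cvg : (fun h : R => (h^-1 *: ((f \o shift t) (h *: 1) - f t)) i j) @ 0^'
    --> ('D_1 f t) i j.
  apply: (continuous_cvg _ (@coord_continuous R m p i j ('D_1 f t))) => //.
split; last by rewrite /derive dq_coordE; apply: cvg_lim.
by rewrite /derivable dq_coordE; apply/cvg_ex; exists (('D_1 f t) i j).
Qed.

Lemma is_derive_sqrt_sum_sqr m (g : 'I_m -> R -> R) (dg : 'I_m -> R) (t : R) :
  (forall i, is_derive t 1 (g i) (dg i)) -> 0 < \sum_i g i t ^+ 2 ->
  is_derive t 1 (fun s => Num.sqrt (\sum_i g i s ^+ 2))
    ((\sum_i g i t * dg i) / Num.sqrt (\sum_i g i t ^+ 2)).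
Proof.
move=> gdrv sum_gt0.
have sum_drv : is_derive t 1 (fun s => \sum_i g i s ^+ 2) (\sum_i 2 * (g i t * dg i)).
  have := is_derive_sum (fun i => is_deriveX 2 (gdrv i)); rewrite fct_sumE.
  by move=> /is_derive_eq; apply; apply: eq_bigr => i _; rewrite expr1 mulrA.
apply: is_derive_eq (is_derive1_comp (is_derive1_sqrt sum_gt0) sum_drv) _.
have sqrt_neq0 : Num.sqrt (\sum_i g i t ^+ 2) != 0 by rewrite gt_eqF ?sqrtr_gt0.
by rewrite -mulr_sumr; field.
Qed.

Lemma is_derive_scalel (V : normedModType R) (k : R -> R) (u : V) (t dk : R) :
  is_derive t 1 k dk -> is_derive t 1 (fun s => k s *: u) (dk *: u).
Proof.
move=> [kdrv <-].
have kdiff : differentiable k t by apply/derivable1_diffP.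
split; first exact/diff_derivable/differentiableZl.
by rewrite deriveE ?diffZl -?deriveE //; exact: differentiableZl.
Qed.

Lemma is_derive_norm (f : R -> R) (t df : R) : is_derive t 1 f df -> f t != 0 ->
  is_derive t 1 (fun s => `|f s|) (f t * df / `|f t|).
Proof.
move=> fdrv ft0.
have sqr_gt0 : 0 < f t ^+ 2 by rewrite lt_def sqr_ge0 sqrf_eq0 ft0.
have := @is_derive1_comp _ Num.sqrt (f ^+ 2) t _ _ (is_derive1_sqrt sqr_gt0) (is_deriveX 2 fdrv).
rewrite (_ : Num.sqrt \o f ^+ 2 = (fun s => `|f s|)); last first.
  by apply/funext => s /=; rewrite sqrtr_sqr.
move=> /is_derive_eq; apply; rewrite sqrtr_sqr expr1 -[_ *: df]/(2 * f t * df).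
by field; rewrite normr_eq0.
Qed.

Lemma is_derive_global_min_le0 (f : R -> R) (c df : R) :
  is_derive c 1 f df -> (forall s, f c <= f s) -> df <= 0.
Proof.
move=> [fdrv <-] cmin.
rewrite ['D_1 f c]cvg_at_leftE //; apply: limr_le.
  rewrite -(cvg_at_leftE (fun h => h^-1 *: ((f \o shift c) _ - f c))) //.
  apply: cvg_trans fdrv; apply: cvg_app.
  move=> A [e e_gt0 Ae]; exists e => // h he h_lt0; apply: Ae => //.
  exact/ltr0_neq0.
near=> h; apply: mulr_le0_ge0; last by rewrite subr_ge0 cmin.
by rewrite invr_le0; apply: ltW; near: h; exists 1 => /=.
Unshelve. all: by end_near. Qed.

Lemma is_derive_global_min (f : R -> R) (c df : R) :
  is_derive c 1 f df -> (forall s, f c <= f s) -> df = 0.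
Proof.
move=> fdrv cmin; apply/eqP; rewrite eq_le is_derive_global_min_le0 //=.
have fNdrv : is_derive (- c) 1 (f \o -%R) (df * -1).
  by apply: is_derive1_comp; rewrite opprK.
by rewrite -oppr_le0 -mulrN1 (is_derive_global_min_le0 fNdrv) //= => s; rewrite opprK.
Qed.

Lemma derive_along_line (V W : normedModType R) (f : V -> W) (a w : V) :
  'D_w f a = 'D_1 (fun h : R => f (h *: w + a)) 0.
Proof.
rewrite /derive; set dq1 := fun h => h^-1 *: _; set dq2 := fun h => h^-1 *: _.
suff -> : dq1 = dq2 by [].
by apply/funext => h; rewrite /dq1 /dq2 /= addr0 scale0r add0r [h%:A]mulr1.
Qed.

End RealCalculus.

Section RealFieldInequalities.
Variable R : realFieldType.

Lemma cauchy_schwarz_sum m (f g : 'I_m -> R) :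
  (\sum_i f i * g i) ^+ 2 <= (\sum_i f i ^+ 2) * (\sum_i g i ^+ 2).
Proof.
set Sf := \sum_i f i ^+ 2; set Sg := \sum_i g i ^+ 2; set Sfg := \sum_i f i * g i.
have Sf_ge0 : 0 <= Sf by rewrite sumr_ge0 // => i _; rewrite sqr_ge0.
have Sg_ge0 : 0 <= Sg by rewrite sumr_ge0 // => i _; rewrite sqr_ge0.
have [Sg_eq0|Sg_neq0] := eqVneq Sg 0.
  have g0 i : g i = 0.
    apply/eqP; rewrite -sqrf_eq0; apply/eqP/(psumr_eq0P _ Sg_eq0) => // j _.
    by rewrite sqr_ge0.
  by rewrite /Sfg big1 ?expr0n ?Sg_eq0 ?mulr0 // => i _; rewrite g0 mulr0.
have Sg_gt0 : 0 < Sg by rewrite lt_def Sg_neq0.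
pose tau := Sfg / Sg.
have : 0 <= \sum_i (f i - tau * g i) ^+ 2 by rewrite sumr_ge0 // => i _; rewrite sqr_ge0.
have -> : \sum_i (f i - tau * g i) ^+ 2 = Sf - 2 * tau * Sfg + tau ^+ 2 * Sg.
  rewrite (eq_bigr (fun i => f i ^+ 2 - 2 * tau * (f i * g i) + tau ^+ 2 * g i ^+ 2));
    last by move=> i _; ring.
  by rewrite big_split sumrB /= -!mulr_sumr.
have -> : Sf - 2 * tau * Sfg + tau ^+ 2 * Sg = (Sf * Sg - Sfg ^+ 2) / Sg.
  by rewrite /tau; field; rewrite gt_eqF.
by rewrite pmulr_lge0 ?invr_gt0 // subr_ge0.
Qed.

Lemma mixed_product_le (be ga T u q : R) : 0 <= be -> 0 <= ga -> 0 <= T <= 1 ->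
  - ((u + T * q) * (be * q + ga * T * u)) <= (be + ga) * `|u| * `|q|.
Proof.
move=> be_ge0 ga_ge0 /andP[T_ge0 T_le1].
have -> : - ((u + T * q) * (be * q + ga * T * u)) =
    (be + ga * T ^+ 2) * - (u * q) - T * (ga * u ^+ 2 + be * q ^+ 2) by ring.
have coef_ge0 : 0 <= be + ga * T ^+ 2 by rewrite addr_ge0 // mulr_ge0 // sqr_ge0.
have square_terms_ge0 : 0 <= T * (ga * u ^+ 2 + be * q ^+ 2).
  by rewrite mulr_ge0 // addr_ge0 // mulr_ge0 // sqr_ge0.
have uq_le : (be + ga * T ^+ 2) * - (u * q) <= (be + ga * T ^+ 2) * (`|u| * `|q|).
  by rewrite ler_wpM2l // -normrM -normrN ler_norm.
have coef_le : (be + ga * T ^+ 2) * (`|u| * `|q|) <= (be + ga) * (`|u| * `|q|).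
  by rewrite ler_wpM2r ?mulr_ge0 // lerD2l ler_piMr // expr_le1.
rewrite -mulrA; lra.
Qed.

Lemma angle_rate_bound (al be ga N a0 w0 P Sa Sw c : R) :
  0 <= al -> 0 <= N -> 0 <= be -> 0 <= ga -> a0 != 0 -> w0 != 0 ->
  0 < Sw -> Sw <= `|w0| -> `|P| <= Sa * Sw ->
  c = al * N * (a0 * w0 + P) / (a0 ^+ 2 + Sa ^+ 2) ->
  - be * (c * P + N * Sw ^+ 2) / (Sw * `|w0|) - Sw / `|w0| * (ga * (c * a0 + N * w0) / w0)
  <= - (be + ga) * N * (Sw / `|w0|) + al * (be + ga) * N * (Sa / `|a0| / (1 + (Sa / `|a0|) ^+ 2)).
Proof.
move=> al_ge0 N_ge0 be_ge0 ga_ge0 a0_neq0.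
(* Both sides are invariant under (a0, w0) -> (-a0, -w0). *)
wlog w0_gt0 : a0 w0 P c a0_neq0 / 0 < w0 => [hwlog w0_neq0|_].
  have [w0_gt0|w0_le0] := ltP 0 w0; first exact: hwlog.
  have w0_lt0 : w0 < 0 by rewrite lt_neqAle w0_neq0 w0_le0.
  move=> Sw_gt0 Sw_le P_le c_def.
  have := hwlog (- a0) (- w0) P c; rewrite !normrN !oppr_eq0 oppr_gt0 mulrNN sqrrN.
  move=> /(_ a0_neq0 w0_lt0 w0_neq0 Sw_gt0 Sw_le P_le c_def).
  by rewrite !mulrN -opprD invrN !mulrN !mulNr opprK mulrN.
move=> Sw_gt0 Sw_le P_le ->.
have Sa_ge0 : 0 <= Sa by rewrite -(pmulr_lge0 _ Sw_gt0) (le_trans _ P_le).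
rewrite (gtr0_norm w0_gt0) in Sw_le *.
set T := Sw / w0; set q := P / Sw; set K := a0 ^+ 2 + Sa ^+ 2.
have K_gt0 : 0 < K by rewrite ltr_pwDl ?sqr_ge0 // lt_def sqr_ge0 sqrf_eq0 a0_neq0.
have T01 : 0 <= T <= 1.
  by rewrite /T divr_ge0 ?(ltW Sw_gt0) ?(ltW w0_gt0) //= ler_pdivrMr // mul1r.
have q_le : `|q| <= Sa by rewrite /q normrM normfV (gtr0_norm Sw_gt0) ler_pdivrMr.
have a0_norm_neq0 : `|a0| != 0 by rewrite normr_eq0.
have tan_frac : Sa / `|a0| / (1 + (Sa / `|a0|) ^+ 2) = `|a0| * Sa / K.
  have a0_sqr : a0 ^+ 2 = `|a0| ^+ 2 by rewrite real_normK ?num_real.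
  by rewrite /K a0_sqr; field; rewrite -a0_sqr gt_eqF.
have -> : - be * (al * N * (a0 * w0 + P) / K * P + N * Sw ^+ 2) / (Sw * w0)
    - T * (ga * (al * N * (a0 * w0 + P) / K * a0 + N * w0) / w0)
    = - (be + ga) * N * T + al * N / K * - ((a0 + T * q) * (be * q + ga * T * a0)).
  by rewrite /T /q; field; rewrite !gt_eqF.
rewrite tan_frac lerD2l.
have -> : al * (be + ga) * N * (`|a0| * Sa / K) = al * N / K * ((be + ga) * `|a0| * Sa).
  by ring.
rewrite ler_wpM2l ?divr_ge0 ?mulr_ge0 ?(ltW K_gt0) //.
apply: le_trans (mixed_product_le a0 q be_ge0 ga_ge0 T01) _.
by rewrite ler_wpM2l // mulr_ge0 // addr_ge0.
Qed.

End RealFieldInequalities.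

Section SplitCoordinates.
Variables (R : realType) (n : nat).
Implicit Types x y z : 'rV[R]_n.+1.

Definition sdot x y : R := \sum_(i < n) x ord0 (lift ord0 i) * y ord0 (lift ord0 i).

Lemma sdotC x y : sdot x y = sdot y x.
Proof. by apply: eq_bigr => i _; rewrite mulrC. Qed.

Lemma sdotDr x y z : sdot x (y + z) = sdot x y + sdot x z.
Proof. by rewrite /sdot -big_split; apply: eq_bigr => i _; rewrite mxE mulrDr. Qed.

Lemma sdotZr (k : R) x y : sdot x (k *: y) = k * sdot x y.
Proof. by rewrite /sdot mulr_sumr; apply: eq_bigr => i _; rewrite mxE mulrCA. Qed.

Lemma ucompD x y : ucomp (x + y) = ucomp x + ucomp y.
Proof. by rewrite /ucomp mxE. Qed.

Lemma ucompZ (k : R) x : ucomp (k *: x) = k * ucomp x.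
Proof. by rewrite /ucomp mxE. Qed.

Lemma sum_coord_mul x y : \sum_i x ord0 i * y ord0 i = ucomp x * ucomp y + sdot x y.
Proof. by rewrite big_ord_recl. Qed.

Lemma snorm_sqr x : snorm x ^+ 2 = sdot x x.
Proof.
rewrite sqr_sqrtr; first by apply: eq_bigr => i _; rewrite expr2.
by rewrite sumr_ge0 // => i _; rewrite sqr_ge0.
Qed.

Lemma enorm_sqr x : enorm x ^+ 2 = ucomp x ^+ 2 + snorm x ^+ 2.
Proof.
rewrite snorm_sqr [ucomp x ^+ 2]expr2 -sum_coord_mul sqr_sqrtr.
  by apply: eq_bigr => i _; rewrite expr2.
by rewrite sumr_ge0 // => i _; rewrite sqr_ge0.
Qed.

Lemma tan_ang_ge0 x : 0 <= tan_ang x.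
Proof. by rewrite divr_ge0 ?sqrtr_ge0. Qed.

Lemma enorm_gt0 x : ucomp x != 0 -> 0 < enorm x.
Proof.
move=> xu_neq0; rewrite /enorm sqrtr_gt0 big_ord_recl.
have : 0 < x ord0 ord0 ^+ 2 by rewrite lt_def sqr_ge0 sqrf_eq0 xu_neq0.
have : 0 <= \sum_(i < n) x ord0 (lift ord0 i) ^+ 2.
  by rewrite sumr_ge0 // => i _; rewrite sqr_ge0.
lra.
Qed.

Lemma sdot_le x y : `|sdot x y| <= snorm x * snorm y.
Proof.
rewrite -ler_sqr ?nnegrE ?mulr_ge0 ?sqrtr_ge0 // exprMn !snorm_sqr real_normK ?num_real //.
exact: cauchy_schwarz_sum.
Qed.

Lemma ucomp_mulAmx (ga be : R) y : ucomp (y *m Amx n ga be) = ga * ucomp y.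
Proof. by rewrite /ucomp /Amx mul_mx_diag !mxE eqxx mulrC. Qed.

Lemma sdot_mulAmx (ga be : R) x y : sdot x (y *m Amx n ga be) = - be * sdot x y.
Proof.
rewrite /sdot mulr_sumr; apply: eq_bigr => i _.
by rewrite /Amx mul_mx_diag !mxE lift_eqF; ring.
Qed.

Lemma is_derive_snorm (x : R -> 'rV[R]_n.+1) (t : R) (dx : 'rV[R]_n.+1) :
  is_derive t 1 x dx -> snorm (x t) != 0 ->
  is_derive t 1 (fun s => snorm (x s)) (sdot (x t) dx / snorm (x t)).
Proof.
move=> xdrv xs_neq0.
apply: (is_derive_sqrt_sum_sqr (g := fun i s => x s ord0 (lift ord0 i))).
  by move=> i; apply: is_derive_coord.
rewrite lt_def sumr_ge0 ?andbT => [|i _]; last by rewrite sqr_ge0.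
by apply: contra xs_neq0 => /eqP sum0; rewrite /snorm sum0 sqrtr0.
Qed.

Lemma is_derive_enorm (x : R -> 'rV[R]_n.+1) (t : R) (dx : 'rV[R]_n.+1) :
  is_derive t 1 x dx -> 0 < enorm (x t) ->
  is_derive t 1 (fun s => enorm (x s))
    ((ucomp (x t) * ucomp dx + sdot (x t) dx) / enorm (x t)).
Proof.
move=> xdrv x_gt0; rewrite -sum_coord_mul.
apply: (is_derive_sqrt_sum_sqr (g := fun i s => x s ord0 i)) => [i|].
  exact: is_derive_coord.
by rewrite -sqrtr_gt0.
Qed.

Lemma is_derive_tan_ang (v : R -> 'rV[R]_n.+1) (t : R) (dv : 'rV[R]_n.+1) :
  is_derive t 1 v dv -> ucomp (v t) != 0 -> snorm (v t) != 0 ->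
  is_derive t 1 (fun s => tan_ang (v s))
    (sdot (v t) dv / (snorm (v t) * `|ucomp (v t)|)
     - tan_ang (v t) * (ucomp dv / ucomp (v t))).
Proof.
move=> vdrv vu_neq0 vs_neq0.
have u_drv := is_derive_norm (is_derive_coord ord0 ord0 vdrv) vu_neq0.
have u_norm_neq0 : `|ucomp (v t)| != 0 by rewrite normr_eq0.
have := is_deriveM (is_derive_snorm vdrv vs_neq0)
  (is_deriveV (f := fun s => `|ucomp (v s)|) u_norm_neq0 u_drv).
move=> /is_derive_eq; apply.
rewrite /tan_ang -[ucomp _]/(v t ord0 ord0) -[ucomp dv]/(dv ord0 ord0).
rewrite real_normK ?num_real //.
have scaleE (k r : R) : k *: r = k * r by [].
by rewrite !scaleE; field; rewrite vs_neq0 vu_neq0 u_norm_neq0.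
Qed.

Lemma derive_vfield (al ga be : R) a w : 0 < enorm a ->
  'D_w (vfield al ga be) a =
  ((al * enorm a `^ al * (ucomp a * ucomp w + sdot a w) / enorm a ^+ 2) *: a
   + enorm a `^ al *: w) *m Amx n ga be.
Proof.
move=> a_gt0; rewrite derive_along_line.
pose line h : 'rV[R]_n.+1 := h *: w + a.
pose psi h := enorm (line h) `^ al.
have line_drv : is_derive (0 : R) 1 line w.
  have := is_deriveD (is_derive_scalel w (is_derive_id (0 : R) 1))
    (is_derive_cst a (0 : R) 1).
  by rewrite scale1r addr0.
have line0 : line 0 = a by rewrite /line scale0r add0r.
have psi_drv : is_derive (0 : R) 1 psi
    (al * enorm a `^ (al - 1) * ((ucomp a * ucomp w + sdot a w) / enorm a)).
  have line0_gt0 : 0 < enorm (line 0) by rewrite line0.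
  have := @is_derive1_comp R (@powR R ^~ al) (fun h : R => enorm (line h)) 0 _ _
    (is_derive1_powR al line0_gt0) (is_derive_enorm line_drv line0_gt0).
  by rewrite line0.
have psi_id_drv : is_derive (0 : R) 1 (psi * id) (psi 0).
  have := is_deriveM psi_drv (is_derive_id (0 : R) 1).
  by rewrite scale0r addr0 [_%:A]mulr1.
have vfield_line : (fun h => vfield al ga be (h *: w + a)) =
    (fun h => psi h *: (a *m Amx n ga be)) + (fun h => (psi * id) h *: (w *m Amx n ga be)).
  apply/funext => h.
  change (psi h *: (line h *m Amx n ga be)
          = psi h *: (a *m Amx n ga be) + (psi h * h) *: (w *m Amx n ga be)).
  by rewrite /line mulmxDl scalerDr -scalemxAl scalerA addrC.
have vfield_line_drv := is_deriveD (is_derive_scalel (a *m Amx n ga be) psi_drv)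
  (is_derive_scalel (w *m Amx n ga be) psi_id_drv).
rewrite vfield_line (@derive_val _ _ _ _ _ _ _ vfield_line_drv).
rewrite mulmxDl -!scalemxAl /psi line0; congr (_ *: _ + _).
rewrite powRB ?(gt_eqF a_gt0) ?implybT // powRr1 ?(ltW a_gt0) //.
by field; rewrite gt_eqF.
Qed.

End SplitCoordinates.

Theorem lemma7p7 (R : realType) (n : nat) (hn : (0 < n)%N)
  (al ga be r0 T0 : R)
  (hal : 0 < al < 1) (hga : 0 < ga) (hbe : 0 < be) (hr0 : 0 < r0)
  (hT0 : 0 <= T0)
  (x v : R -> 'rV[R]_n.+1)
  (hY : forall s, 0 <= s <= T0 -> enorm (x s) < r0)
  (hx : forall s, 0 <= s <= T0 -> is_derive s 1 x (vfield al ga be (x s)))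
  (hv : forall s, 0 <= s <= T0 ->
          is_derive s 1 v ('D_(v s) (vfield al ga be) (x s)))
  (t : R) (ht : 0 <= t <= T0)
  (hxu : ucomp (x t) != 0) (hvu : ucomp (v t) != 0)
  (hrho : tan_ang (v t) <= 1) :
  (snorm (v t) != 0 -> derivable (fun s => tan_ang (v s)) t 1) /\
  (forall D : R, is_derive t 1 (fun s => tan_ang (v s)) D ->
     D <= - (be + ga) * enorm (x t) `^ al * tan_ang (v t)
          + al * (be + ga) * enorm (x t) `^ al
            * (tan_ang (x t) / (1 + tan_ang (x t) ^+ 2))).
Proof.
have al_ge0 : 0 <= al by case/andP: hal => /ltW.
have a_gt0 := enorm_gt0 hxu.
have := hv t ht; rewrite derive_vfield //.
set a := x t; set w := v t; set N := enorm a `^ al => v_drv.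
have N_ge0 : 0 <= N by rewrite powR_ge0.
have [ws_eq0|ws_neq0] := eqVneq (snorm w) 0.
  have tan_w0 : tan_ang w = 0 by rewrite /tan_ang ws_eq0 mul0r.
  split => // D D_drv; rewrite tan_w0 mulr0 add0r.
  rewrite (is_derive_global_min D_drv) => [|s]; last by rewrite tan_w0 tan_ang_ge0.
  have tan_frac_ge0 : 0 <= tan_ang a / (1 + tan_ang a ^+ 2).
    by rewrite divr_ge0 ?tan_ang_ge0 // addr_ge0 ?sqr_ge0.
  by apply: mulr_ge0 tan_frac_ge0; rewrite !mulr_ge0 // addr_ge0 ?(ltW hbe) ?(ltW hga).
have tan_drv := is_derive_tan_ang v_drv hvu ws_neq0.
split => [_|D D_drv]; first exact: (@ex_derive _ _ _ _ _ _ _ tan_drv).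
rewrite -(@derive_val _ _ _ _ _ _ _ D_drv) (@derive_val _ _ _ _ _ _ _ tan_drv).
rewrite ucomp_mulAmx ucompD !ucompZ sdot_mulAmx sdotDr !sdotZr -snorm_sqr.
rewrite [sdot w a]sdotC -/w.
have ws_gt0 : 0 < snorm w by rewrite lt_def ws_neq0 sqrtr_ge0.
have ws_le : snorm w <= `|ucomp w|.
  by move: hrho; rewrite /tan_ang ler_pdivrMr ?mul1r // normr_gt0.
apply: angle_rate_bound; rewrite ?(ltW hbe) ?(ltW hga) ?sdot_le //.
by rewrite enorm_sqr.
Qed.
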